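(* Let $V$ be a real vector space of dimension $m$, $\Gamma$ a finitely generated free abelian dense subgroup of $V$ acting by translations, and $\mathcal C$ a countable $\Gamma$-invariant collection of affine hyperplanes with finitely many $\Gamma$-orbits and normals spanning $V$. Suppose there are $W_1,\dots,W_m\in\mathcal C$ intersecting in a single point $p$ and a subset $A\subset\{1,\dots,m\}$ such that $\Gamma^A$ has infinite index in $\Gamma_A$ (equivalently $\mathrm{rk}\,\Gamma^A<\mathrm{rk}\,\Gamma_A$). Then $\mathcal P$ consists of infinitely many $\Gamma$-orbits.
   Context: $\mathcal P$ is the set of points of $V$ that are $0$-dimensional intersections of $m$ elements of $\mathcal C$. For $A\subset\{1,\dots,m\}$, $W_A=\bigcap_{i\in A}W_i$ (with $W_\emptyset=V$), $A^c=\{1,\dots,m\}\setminus A$, $\Gamma^A\subset\Gamma$ is the stabilizer of $W_A$, and $\Gamma_A=\{x\in V:\exists\gamma\in\Gamma,\ \{x+p\}=W_A\cap(W_{A^c}+\gamma)\}$, which is a group containing $\Gamma^A$. *)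

From HB Require Import structures.
From mathcomp Require Import all_boot all_order all_algebra.
From mathcomp Require Import all_classical all_reals all_analysis.
Import numFieldTopology.Exports.
Set Implicit Arguments. Unset Strict Implicit. Unset Printing Implicit Defensive.
Import Order.TTheory GRing.Theory Num.Theory.
Local Open Scope classical_set_scope.
Local Open Scope ring_scope.

Section Defs.
Variables (R : realType) (m : nat).
Notation V := 'rV[R]_m.

Definition hyp (a : V) (c : R) : set V := [set x | (x *m a^T) 0 0 = c].

Definition is_hyperplane (H : set V) : Prop :=
  exists a c, a != 0 /\ H = hyp a c.

Definition translate (H : set V) (g : V) : set V := [set x + g | x in H].

Definition fg_free_subgroup (G : set V) : Prop :=
  exists (n : nat) (b : 'I_n -> V),
    G = [set \sum_(i < n) b i *~ z i | z in [set: 'I_n -> int]] /\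
    (forall z : 'I_n -> int, \sum_(i < n) b i *~ z i = 0 -> forall i, z i = 0).

Definition normals (C : set (set V)) : set V :=
  [set a | a != 0 /\ exists c, C (hyp a c)].

Definition normals_span (C : set (set V)) : Prop :=
  exists s : seq V, (forall a, a \in s -> normals C a) /\ (span s = fullv)%VS.

Definition orbit_pt (G : set V) (x : V) : set V := [set x + g | g in G].
Definition orbit_set (G : set V) (H : set V) : set (set V) :=
  [set translate H g | g in G].

Definition admissible (G : set V) (C : set (set V)) : Prop :=
  fg_free_subgroup G /\ dense G /\
  (forall H, C H -> is_hyperplane H) /\
  countable C /\
  (forall H g, C H -> G g -> C (translate H g)) /\
  finite_set [set orbit_set G H | H in C] /\
  normals_span C.

Definition Pts (C : set (set V)) : set V :=
  [set x | exists Ws : 'I_m -> set V,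
     (forall i, C (Ws i)) /\ \bigcap_(i in [set: 'I_m]) Ws i = [set x]].

Definition W_ (W : 'I_m -> set V) (A : {set 'I_m}) : set V :=
  [set x | forall i, i \in A -> W i x].

Definition GammaUp (G : set V) (W : 'I_m -> set V) (A : {set 'I_m}) : set V :=
  [set g | G g /\ translate (W_ W A) g = W_ W A].

Definition GammaLow (G : set V) (W : 'I_m -> set V) (p : V) (A : {set 'I_m})
  : set V :=
  [set x | exists g, G g /\
     [set x + p] = W_ W A `&` translate (W_ W (~: A)) g].

(* cosets of a subgroup K inside a set L : the index of K in L is infinite
   iff this set is infinite *)
Definition cosets (K L : set V) : set (set V) := [set orbit_pt K x | x in L].

End Defs.

From HB Require Import structures.
From mathcomp Require Import all_boot all_order all_algebra.
From mathcomp Require Import all_classical all_reals all_analysis.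
Import Order.TTheory GRing.Theory Num.Theory.
Set Implicit Arguments. Unset Strict Implicit. Unset Printing Implicit Defensive.

Local Open Scope classical_set_scope.
Local Open Scope ring_scope.

(* A point x0 + p with x0 in Gamma_A is the intersection of the W_i (i in A)
   with the translates W_i + g (i not in A), hence lies in P.  Sending the
   Gamma-orbit O of such points to {x | x + p in O, x stabilizes W_A} recovers
   the coset x0 + Gamma^A, because W_A is an affine subspace through p and
   x0 + p, so x0 stabilizes it.  Thus every coset of Gamma^A in Gamma_A is the
   image of an orbit in P, and finitely many orbits would give finitely many
   cosets. *)

Section Translations.
Variables (R : realType) (m : nat).
Notation V := 'rV[R]_m.

Lemma translateD (X : set V) a b :
  translate (translate X a) b = translate X (a + b).
Proof.
apply/seteqP; split => x /=.
- by case=> y [z Xz <-] <-; exists z => //; rewrite addrA.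
- by case=> z Xz <-; exists (z + a); [exists z | rewrite addrA].
Qed.

Lemma translate0 (X : set V) : translate X 0 = X.
Proof.
apply/seteqP; split => x /=; first by case=> y Xy <-; rewrite addr0.
by move=> Xx; exists x => //; rewrite addr0.
Qed.

Lemma translate_stabD (X : set V) a b :
  translate X a = X -> translate X b = X -> translate X (a + b) = X.
Proof. by rewrite -translateD => -> ->. Qed.

Lemma translate_stabN (X : set V) a :
  translate X a = X -> translate X (- a) = X.
Proof. by move=> Xa; rewrite -{1}Xa translateD subrr translate0. Qed.

Definition affine_closed (X : set V) : Prop :=
  forall u v w, X u -> X v -> X w -> X (u + v - w).

Lemma hyperplane_affine_closed (H : set V) :
  is_hyperplane H -> affine_closed H.
Proof.
case=> a [c [_ ->]] u v w; rewrite /hyp /= => hu hv hw.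
by rewrite !mulmxDl mulNmx [LHS]mxE [X in X + _]mxE [X in _ + X]mxE hu hv hw addrK.
Qed.

Lemma W_affine_closed (W : 'I_m -> set V) (A : {set 'I_m}) :
  (forall i, is_hyperplane (W i)) -> affine_closed (W_ W A).
Proof.
move=> hypW u v w hu hv hw i iA.
exact: hyperplane_affine_closed (hu i iA) (hv i iA) (hw i iA).
Qed.

Lemma affine_closed_translate (X : set V) q x :
  affine_closed X -> X q -> X (x + q) -> translate X x = X.
Proof.
move=> affX Xq Xxq; apply/seteqP; split => y /=.
- by case=> z Xz <-; have := affX _ _ _ Xz Xxq Xq; rewrite addrA addrK.
- move=> Xy; exists (y + q - (x + q)); first exact: affX.
  by rewrite opprD addrACA subrr addr0 subrK.
Qed.

End Translations.

Section Flag.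
Variables (R : realType) (m : nat).
Notation V := 'rV[R]_m.
Variables (G : set V) (W : 'I_m -> set V) (p : V) (A : {set 'I_m}).

Lemma bigcap_split_translate g :
  \bigcap_(i in [set: 'I_m]) (if i \in A then W i else translate (W i) g) =
  W_ W A `&` translate (W_ W (~: A)) g.
Proof.
apply/seteqP; split => x /=.
- move=> hx; split; first by move=> i iA; have := hx i I; rewrite iA.
  exists (x - g); last by rewrite subrK.
  move=> i; rewrite finset.in_setC => /negbTE iA; have := hx i I; rewrite iA.
  by case=> z hz <-; rewrite addrK.
- case=> hA [y hy yx] i _; case: ifP => iA; first exact: (hA i iA).
  by rewrite -yx; exists y => //; apply: hy; rewrite finset.in_setC iA.
Qed.

Lemma GammaLow_Pts (C : set (set V)) x :
  (forall H g, C H -> G g -> C (translate H g)) -> (forall i, C (W i)) ->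
  GammaLow G W p A x -> Pts C (x + p).
Proof.
move=> invC CW [g [Gg Hg]].
exists (fun i => if i \in A then W i else translate (W i) g).
split; last by rewrite bigcap_split_translate Hg.
by move=> i; case: ifP => _; [exact: CW | exact: invC].
Qed.

Hypothesis hypW : forall i, is_hyperplane (W i).
Hypothesis Wp : \bigcap_(i in [set: 'I_m]) W i = [set p].

Lemma W_p : W_ W A p.
Proof. by move=> i _; have : [set p] p by []; rewrite -Wp => /(_ i I). Qed.

Lemma GammaLow_stab x :
  GammaLow G W p A x -> translate (W_ W A) x = W_ W A.
Proof.
case=> g [_ Hg]; have : [set x + p] (x + p) by [].
rewrite Hg => -[WAx _].
apply: (affine_closed_translate _ W_p WAx); exact: W_affine_closed.
Qed.

Lemma GammaUp_coset x0 : GammaLow G W p A x0 ->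
  orbit_pt (GammaUp G W A) x0 =
  [set x | orbit_pt G (x0 + p) (x + p) /\ translate (W_ W A) x = W_ W A].
Proof.
move=> /GammaLow_stab stab0; apply/seteqP; split => x /=.
- case=> g [Gg stabg] <-; split; last exact: translate_stabD.
  by exists g => //; rewrite addrAC.
- case=> [[g Gg e] stabx]; have xE : x = x0 + g.
    by apply: (addIr p); rewrite -e addrAC.
  exists g => //; split => //.
  have -> : g = x - x0 by rewrite xE addrC addKr.
  by apply: translate_stabD => //; apply: translate_stabN.
Qed.

End Flag.

Theorem mainTheorem7 (R : realType) (m : nat) (G : set 'rV[R]_m)
  (C : set (set 'rV[R]_m)) (W : 'I_m -> set 'rV[R]_m) (p : 'rV[R]_m)
  (A : {set 'I_m}) :
  admissible G C ->
  (forall i, C (W i)) ->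
  \bigcap_(i in [set: 'I_m]) W i = [set p] ->
  infinite_set (cosets (GammaUp G W A) (GammaLow G W p A)) ->
  infinite_set [set orbit_pt G x | x in Pts C].
Proof.
move=> [_ [_ [hypC [_ [invC _]]]]] CW Wp infCosets finOrbits; apply: infCosets.
have hypW i : is_hyperplane (W i) by exact: hypC.
pose coset_of_orbit (O : set 'rV[R]_m) :=
  [set x | O (x + p) /\ translate (W_ W A) x = W_ W A].
apply: sub_finite_set (finite_image coset_of_orbit finOrbits).
move=> _ [x0 Lx0 <-]; exists (orbit_pt G (x0 + p)).
  by exists (x0 + p) => //; exact: GammaLow_Pts Lx0.
by rewrite (GammaUp_coset hypW Wp).
Qed.
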